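(* Let $r \geq 2$ and $n \geq 1$ be integers. Let $G$ be a $2$-central group generated by $r$ elements and of exponent $2^n$. Then $G$ is a homomorphic image of ${}^{\lceil n/2 \rceil + 1} G_r$. Moreover, any finite $2$-group generated by $r$ elements is a homomorphic image of ${}^m G_r$ for some positive integer $m$.
   Context: For a group $H$ and integer $m$, $H^m$ denotes the subgroup generated by all $m$-th powers. The $\bar\lambda$-series of a group $G$ is defined by $\bar\lambda_1(G) = G$ and $\bar\lambda_{k+1}(G) = \bar\lambda_k(G)^4[\bar\lambda_k(G), G]$. For $r \geq 2$ and $m \geq 1$, ${}^m G_r = F_r/\bar\lambda_{m+1}(F_r)$ where $F_r$ is the free group of rank $r$. For a finite $2$-group $G$, $\Omega_i(G)$ is the subgroup generated by the elements of order dividing $2^i$; $G$ is called $2$-central if $\Omega_2(G) \leq Z(G)$. *)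

From HB Require Import structures.
From mathcomp Require Import all_boot all_fingroup all_solvable.
Set Implicit Arguments. Unset Strict Implicit. Unset Printing Implicit Defensive.
Import GroupScope.

(* The free group F_r, represented by (unreduced) words in the letters
   x_i^{+1} (false) and x_i^{-1} (true), i : 'I_r.  Free reduction is not
   quotiented out: subgroups of F_r are represented by sets of words closed
   under the group operations, and homomorphisms F_r -> G by evaluation of
   words at an r-tuple of images of the generators. *)
Definition word (r : nat) := seq ('I_r * bool).

Definition winv r (w : word r) : word r := rev (map (fun a => (a.1, ~~ a.2)) w).
Definition wcomm r (w u : word r) : word r := winv w ++ winv u ++ w ++ u.
Definition wpow4 r (w : word r) : word r := w ++ w ++ w ++ w.

Inductive in_gen r (S : word r -> Prop) : word r -> Prop :=
| gen_base w : S w -> in_gen S w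
| gen_nil : in_gen S [::]
| gen_inv w : in_gen S w -> in_gen S (winv w)
| gen_cat w u : in_gen S w -> in_gen S u -> in_gen S (w ++ u).

(* bar-lambda series of F_r:  lambda_bar r 1 = F_r,
   lambda_bar r (k+1) = lambda_bar r k ^4 [lambda_bar r k, F_r]
   (the subgroup generated by 4th powers of elements of lambda_k and by
   commutators [v, u] with v in lambda_k, u in F_r).  Convention
   lambda_bar r 0 = F_r (unused). *)
Fixpoint lambda_bar r (k : nat) : word r -> Prop :=
  match k with
  | 0 => fun _ => True
  | k'.+1 =>
    match k' with
    | 0 => fun _ => True
    | _ => in_gen (fun w => (exists v, @lambda_bar r k' v /\ w = wpow4 v)
                   \/ (exists v u, @lambda_bar r k' v /\ w = wcomm v u))
    end
  end.

Definition weval (gT : finGroupType) r (g : 'I_r -> gT) (w : word r) : gT :=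
  foldr (fun a x => (if a.2 then (g a.1)^-1 else g a.1) * x) 1 w.

Definition r_generated (gT : finGroupType) (r : nat) (G : {set gT}) : Prop :=
  exists g : 'I_r -> gT, G = <<[set g i | i : 'I_r]>>.

(* G is a homomorphic image of  ^m G_r = F_r / lambda_bar_{m+1}(F_r):
   there is a homomorphism F_r -> gT (given by the images g i of the free
   generators) with image G whose kernel contains lambda_bar_{m+1}(F_r). *)
Definition hom_image_mGr (gT : finGroupType) (r m : nat) (G : {set gT}) : Prop :=
  exists g : 'I_r -> gT,
    G = <<[set g i | i : 'I_r]>> /\
    (forall w, @lambda_bar r m.+1 w -> weval g w = 1).

Definition two_central (gT : finGroupType) (G : {group gT}) : Prop :=
  2.-group G /\ 'Ohm_2(G) \subset 'Z(G).

(* Write lambda_k for the image of lambda_bar k in G.  If H is a central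
   subgroup of exponent dividing 4 containing lambda_k, then lambda_(k+1) = 1:
   its generators are 4th powers of elements of H and commutators with central
   elements.  In a 2-central group G, Omega_2(G) is such an H, and G / Omega_2(G)
   is again 2-central with exponent divided by 4, because x^16 = 1 forces
   [x, y]^4 = 1.  Induction on the exponent gives the first claim.  For an
   arbitrary 2-group, factor out a central subgroup of order 2 and induct on the
   order. *)

From mathcomp Require Import all_boot all_fingroup all_solvable.
Set Implicit Arguments. Unset Strict Implicit. Unset Printing Implicit Defensive.
Import GroupScope.

Section WordEvaluation.
Variables (gT : finGroupType) (r : nat) (g : 'I_r -> gT).

Lemma weval_cat (w u : word r) : weval g (w ++ u) = weval g w * weval g u.
Proof. by elim: w => [|a w IH] /=; rewrite ?mul1g // IH mulgA. Qed.

Lemma weval_inv (w : word r) : weval g (winv w) = (weval g w)^-1.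
Proof.
elim: w => [|a w IH] /=; first by rewrite invg1.
rewrite /winv map_cons rev_cons -cats1 weval_cat -/(winv w) IH /= mulg1 invMg.
by case: a.2; rewrite ?invgK.
Qed.

Lemma weval_comm (w u : word r) : weval g (wcomm w u) = [~ weval g w, weval g u].
Proof. by rewrite /wcomm !weval_cat !weval_inv /commg /conjg !mulgA. Qed.

Lemma weval_pow4 (w : word r) : weval g (wpow4 w) = weval g w ^+ 4.
Proof. by rewrite /wpow4 !weval_cat !expgS expg0 mulg1 !mulgA. Qed.

Lemma mem_weval (G : {group gT}) w : (forall i, g i \in G) -> weval g w \in G.
Proof.
move=> gG; elim: w => [|a w IH] /=; first exact: group1.
by rewrite groupM //; case: a.2; rewrite ?groupV.
Qed.

Lemma mem_weval_gen (H : {group gT}) (S : word r -> Prop) w :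
  (forall v, S v -> weval g v \in H) -> in_gen S w -> weval g w \in H.
Proof.
move=> SH; elim=> {w} [w /SH //| |w _ IH|w u _ IH1 _ IH2].
- exact: group1.
- by rewrite weval_inv groupV.
- by rewrite weval_cat groupM.
Qed.

End WordEvaluation.

Lemma morph_weval (aT rT : finGroupType) (D : {group aT})
    (f : {morphism D >-> rT}) r (g : 'I_r -> aT) w :
  (forall i, g i \in D) -> weval (fun i => f (g i)) w = f (weval g w).
Proof.
move=> gD; elim: w => [|a w IH] /=; first by rewrite morph1.
rewrite IH morphM ?mem_weval //; last by case: a.2; rewrite ?groupV.
by case: a.2; rewrite ?morphV.
Qed.

Lemma weval_coset_eq1 (gT : finGroupType) (H : {group gT}) r
    (g : 'I_r -> gT) w :
  (forall i, g i \in 'N(H)) -> weval (fun i => coset H (g i)) w = 1 ->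
  weval g w \in H.
Proof.
move=> gN; rewrite (morph_weval (coset_morphism H)) //.
by apply: coset_idr; apply: mem_weval.
Qed.

Lemma lambda_barSS_eq1 (gT : finGroupType) (G H : {group gT}) r
    (g : 'I_r -> gT) k :
  H \subset 'Z(G) -> exponent H %| 4 -> (forall i, g i \in G) ->
  (forall w, @lambda_bar r k.+1 w -> weval g w \in H) ->
  forall w, @lambda_bar r k.+2 w -> weval g w = 1.
Proof.
move=> sHZ expH gG lamH w lam_w; apply/set1gP.
apply: mem_weval_gen lam_w => {}w [[v [lam_v ->]]|[v [u [lam_v ->]]]].
  by rewrite weval_pow4 (exponentP expH) ?lamH // set11.
rewrite weval_comm; apply/set1gP; apply/eqP/commgP.
have /centerP[_ cGv] := subsetP sHZ _ (lamH _ lam_v).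
by apply: cGv; apply: mem_weval.
Qed.

Lemma lambda_barS_eq1 (gT : finGroupType) (G : {group gT}) r
    (g : 'I_r -> gT) k :
  (forall i, g i \in G) ->
  (forall w, @lambda_bar r k.+1 w -> weval g w = 1) ->
  forall w, @lambda_bar r k.+2 w -> weval g w = 1.
Proof.
move=> gG lam1; apply: (@lambda_barSS_eq1 _ G 1%G) => //.
- exact: sub1G.
- by rewrite exponent1 dvd1n.
- by move=> w /lam1 ->; apply: group1.
Qed.

Section TwoCentral.
Variables (gT : finGroupType) (G : {group gT}).
Hypothesis tcG : two_central G.

Lemma two_central_OhmE : 'Ohm_2(G) = 'Ldiv_4(G).
Proof.
case: tcG => pG sOZ; apply: (OhmEabelian pG).
exact: abelianS sOZ (center_abelian G).
Qed.

Lemma exponent_Ohm2_two_central : exponent 'Ohm_2(G) %| 4.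
Proof. by apply/exponentP=> x; rewrite two_central_OhmE => /LdivP[]. Qed.

Lemma two_central_center x : x \in G -> x ^+ 4 = 1 -> x \in 'Z(G).
Proof.
move=> Gx x4; case: tcG => _ sOZ; apply: (subsetP sOZ).
by rewrite two_central_OhmE; apply/LdivP.
Qed.

(* If #[c] = 2^k with k >= 3, then e := c^(2^(k-2)) has order 4, so it is
   central, yet conjugation by x inverts it. *)
Lemma expg4_inverted_mod_central c x d :
  c \in G -> x \in G -> d \in 'Z(G) -> d ^+ 2 = 1 -> c ^ x = d * c^-1 ->
  c ^+ 4 = 1.
Proof.
move=> Gc Gx Zd d2 cx; case: tcG => pG _.
have [k oc] := p_natP (mem_p_elt pG Gc).
have [le_k2|] := leqP k 2.
  by apply/eqP; rewrite -order_dvdn oc (dvdn_exp2l 2 le_k2).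
case: k oc => [|[|[|b]]] // oc _.
set e := c ^+ (2 ^ b.+1).
have Ge : e \in G by rewrite groupX.
have e4 : e ^+ 4 = 1.
  by rewrite -expgM -(expg_order c) oc -[4%N]/(2 ^ 2)%N -expnD addn2.
have /centerP[_ cGe] := two_central_center Ge e4.
have cdc : commute d c^-1 by case/centerP: Zd => _ cGd; apply: cGd; rewrite groupV.
have ex : e ^ x = e^-1.
  rewrite /e conjXg cx expgMn // expgVn -[RHS]mul1g; congr (_ * _).
  by rewrite expnS expgM d2 expg1n.
have exe : e ^ x = e by apply/conjg_fixP/commgP; apply: cGe.
have : e ^+ 2 = 1 by rewrite expgS expg1 -{2}exe ex mulgV.
rewrite /e -expgM -expnSr => /eqP; rewrite -order_dvdn oc => /dvdn_leq.
by rewrite expn_gt0 leq_exp2l // ltnn => /(_ isT).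
Qed.

Lemma commg_central_involution t y :
  t \in G -> y \in G -> t ^+ 2 \in 'Z(G) ->
  [~ t, y] \in 'Z(G) /\ [~ t, y] ^+ 2 = 1.
Proof.
move=> Gt Gy Zt2; set c := [~ t, y].
have Gc : c \in G by rewrite groupR.
have ct : c ^ t = c^-1.
  have /commgP/eqP t2y : commute (t ^+ 2) y by case/centerP: Zt2 => _; apply.
  by rewrite -(mul1g c^-1) -t2y expgS expg1 commMgJ mulgK.
have c4 : c ^+ 4 = 1.
  by apply: (expg4_inverted_mod_central Gc Gt (group1 _) (expg1n _ _)); rewrite mul1g.
have Zc := two_central_center Gc c4; split=> //.
have ctc : c ^ t = c by apply/conjg_fixP/commgP; case/centerP: Zc => _; apply.
by rewrite expgS expg1 -{2}ctc ct mulgV.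
Qed.

Lemma commg_expg4_eq1 x y :
  x \in G -> y \in G -> (x ^+ 4) ^+ 4 = 1 -> [~ x, y] ^+ 4 = 1.
Proof.
move=> Gx Gy x16.
have Zx4 : (x ^+ 2) ^+ 2 \in 'Z(G).
  by rewrite -expgM; apply: two_central_center; rewrite ?groupX.
have [Zd d2] := commg_central_involution (groupX 2 Gx) Gy Zx4.
apply: (expg4_inverted_mod_central (groupR Gx Gy) Gx Zd d2).
by rewrite expgS expg1 commMgJ mulgK.
Qed.

Lemma two_central_quotient_Ohm2 : two_central (G / 'Ohm_2(G)).
Proof.
have [pG _] := tcG; split; first exact: quotient_pgroup.
rewrite (OhmE _ (quotient_pgroup _ pG)) gen_subG.
apply/subsetP=> _ /LdivP[/morphimP[x Nx Gx ->] x4].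
have x16 : (x ^+ 4) ^+ 4 = 1.
  have : x ^+ 4 \in 'Ohm_2(G) by apply: coset_idr; rewrite ?groupX // morphX.
  by rewrite two_central_OhmE => /LdivP[].
apply/centerP; split; first exact: mem_quotient.
move=> _ /morphimP[y Ny Gy ->].
rewrite /commute -!morphM // commgC; apply: coset_kerr.
suff : [~ x, y] \in 'Ohm_2(G) by [].
rewrite two_central_OhmE; apply/LdivP; split; first exact: groupR.
exact: commg_expg4_eq1.
Qed.

Lemma exponent_quotient_Ohm2 k :
  exponent G %| 4 ^ k.+1 -> exponent (G / 'Ohm_2(G)) %| 4 ^ k.
Proof.
move=> expG; apply/exponentP=> _ /morphimP[x Nx Gx ->]; rewrite -morphX //.
apply: coset_id; rewrite two_central_OhmE; apply/LdivP; split; first exact: groupX.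
by rewrite -expgM -expnSr; apply: (exponentP expG).
Qed.

End TwoCentral.

Lemma two_central_lambda_bar_eq1 k (gT : finGroupType) (G : {group gT}) r
    (g : 'I_r -> gT) :
  two_central G -> exponent G %| 4 ^ k -> (forall i, g i \in G) ->
  forall w, @lambda_bar r k.+1 w -> weval g w = 1.
Proof.
elim: k gT G g => [|k IH] gT G g tcG expG gG w lam_w.
  by rewrite -(expg1 (weval g w)); apply: (exponentP expG); apply: mem_weval.
have /andP[_ nOG] : 'Ohm_2(G) <| G := Ohm_normal 2 G.
have gQ i : coset 'Ohm_2(G) (g i) \in G / 'Ohm_2(G) by rewrite mem_quotient.
have lamQ := IH _ _ _ (two_central_quotient_Ohm2 tcG)
  (exponent_quotient_Ohm2 tcG expG) gQ.
apply: (lambda_barSS_eq1 _ (exponent_Ohm2_two_central tcG) gG _ lam_w).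
  by case: tcG.
move=> v /lamQ; apply: weval_coset_eq1 => i; exact: subsetP nOG _ (gG i).
Qed.

Lemma pgroup_center_order_p (gT : finGroupType) (p : nat) (G : {group gT}) :
  p.-group G -> G :!=: 1 -> exists2 z, z \in 'Z(G) & #[z] = p.
Proof.
move=> pG ntG; have pZ : p.-group 'Z(G) := pgroupS (center_sub G) pG.
have ntZ : 'Z(G) != 1.
  by apply: contraNneq ntG => Z1; apply/eqP; apply: trivg_center_pgroup pG Z1.
have [pr_p dvdZ _] := pgroup_pdiv pZ ntZ.
by have [z] := Cauchy pr_p dvdZ; exists z.
Qed.

Lemma pgroup_lambda_bar_eq1 (gT : finGroupType) (G : {group gT}) r
    (g : 'I_r -> gT) :
  2.-group G -> (forall i, g i \in G) ->
  exists2 m, 0 < m & forall w, @lambda_bar r m.+1 w -> weval g w = 1.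
Proof.
move: {2}_.+1 (ltnSn #|G|) => N; elim: N gT G g => // N IH gT G g ltGN pG gG.
have [G1 | ntG] := eqsVneq G 1.
  by rewrite G1 in gG; exists 1%N => // w _; apply/set1gP; apply: mem_weval.
have [z Zz oz] := pgroup_center_order_p pG ntG.
have sZ : <[z]> \subset 'Z(G) by rewrite cycle_subG.
have /andP[_ nZG] : <[z]> <| G := sub_center_normal sZ.
have ltQN : #|G / <[z]>| < N.
  rewrite -ltnS; apply: leq_trans ltGN; apply: ltn_quotient; last exact: subset_trans (center_sub G).
  by rewrite cycle_eq1 -order_eq1 oz.
have gQ i : coset <[z]> (g i) \in G / <[z]> by rewrite mem_quotient.
have [m m_gt0 lamQ] := IH _ _ _ ltQN (quotient_pgroup _ pG) gQ.
exists m.+1 => //; apply: (lambda_barSS_eq1 sZ _ gG).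
  by rewrite exponent_cycle oz.
move=> v /lamQ; apply: weval_coset_eq1 => i; exact: subsetP nZG _ (gG i).
Qed.

Lemma r_generated_gens (gT : finGroupType) r (G : {group gT}) :
  r_generated r G ->
  exists2 g : 'I_r -> gT, G :=: <<[set g i | i : 'I_r]>> & forall i, g i \in G.
Proof.
by case=> g defG; exists g => // i; rewrite defG mem_gen // imset_f.
Qed.

Theorem mainTheorem2 (r n : nat) :
  (2 <= r)%N -> (1 <= n)%N ->
  (forall (gT : finGroupType) (G : {group gT}),
      two_central G -> r_generated r G -> exponent G = (2 ^ n)%N ->
      hom_image_mGr r (uphalf n).+1 G) /\
  (forall (gT : finGroupType) (G : {group gT}),
      2.-group G -> r_generated r G ->
      exists m, (0 < m)%N /\ hom_image_mGr r m G).
Proof.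
move=> _ _; split=> gT G.
  move=> tcG /r_generated_gens[g defG gG] expG; exists g; split=> //.
  apply: (lambda_barS_eq1 gG); apply: (two_central_lambda_bar_eq1 tcG _ gG).
  rewrite expG -[4%N]/(2 ^ 2)%N -expnM mul2n dvdn_exp2l //.
  by rewrite -leq_uphalf_double.
move=> pG /r_generated_gens[g defG gG].
have [m m_gt0 lam1] := pgroup_lambda_bar_eq1 pG gG.
by exists m; split=> //; exists g.
Qed.
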